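(* Let $\mathbb{K}$ be an algebraically closed field of characteristic $0$, let $p\in\mathbb{K}[x,y]\setminus(\mathbb{K}[x]\cup\mathbb{K}[y])$ be irreducible, let $r\in\mathbb{K}[x,y]_p\setminus\langle p\rangle$, and let $f\in\mathbb{K}(x)$, $g\in\mathbb{K}(y)$, $q\in\mathbb{K}[x,y]_p$ satisfy $r+qp=f-g$. Assume $(\infty,\infty)$ lies on the curve associated with $p$ and let $\varphi\in\mathbb{K}\{\{x^{-1}\}\}$ satisfy $p(x,\varphi)=0$ and $\deg\varphi>0$. Let $b$ be such that $\mathrm{m}(\infty,f)\le b$. If $\deg r(x,\varphi)>b$, then $\mathrm{m}(\infty,g)=\deg r(x,\varphi)/\deg\varphi$; if $\deg r(x,\varphi)\le b$, then $\mathrm{m}(\infty,g)\le b/\deg\varphi$.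
   Context: $\mathbb{K}[x,y]_p$ is the set of $h\in\mathbb{K}(x,y)$ whose reduced denominator is not divisible by $p$; $\langle p\rangle=\{qp:q\in\mathbb{K}[x,y]_p\}$. The curve associated with $p$ is the zero set in $\mathbb{P}^1\times\mathbb{P}^1$ of the bi-homogenization $x_0^{\deg_x p}y_0^{\deg_y p}p(x_1/x_0,y_1/y_0)$. $\mathbb{K}\{\{x^{-1}\}\}$ is the field of Puiseux series in $x^{-1}$; the degree of a nonzero such series is the largest exponent of $x$ occurring in it. For $f\in\mathbb{K}(x)$, $\mathrm{m}(\infty,f)=\deg f_n-\deg f_d$ (numerator and denominator degrees); likewise $\mathrm{m}(\infty,g)=\deg g_n-\deg g_d$ for $g\in\mathbb{K}(y)$. *)

From HB Require Import structures.
From mathcomp Require Import all_boot all_order all_algebra.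
From mathcomp Require Import boolp classical_sets fsbigop.
Set Implicit Arguments.
Unset Strict Implicit.
Unset Printing Implicit Defensive.
Import Order.TTheory GRing.Theory Num.Theory.
Local Open Scope ring_scope.

(* Bivariate polynomials K[x,y] are {poly {poly K}}: the OUTER variable is y,
   the coefficients are polynomials in x.  An element a : {poly K} of K[x] is
   a%:P ; an element b : {poly K} of K[y] is b^:P.  K(x,y) is
   {fraction {poly {poly K}}}. *)

Notation "x %:F" := (@FracField.tofrac _ x) : ring_scope.

Section Defs.
Variable K : fieldType.
Local Notation P2 := {poly {poly K}}.
Local Notation F2 := {fraction P2}.

Definition pdeg (a : {poly K}) : int := (size a).-1%:Z.

(* m(oo, n/d) = deg n - deg d *)
Definition m_inf (n d : {poly K}) : int := pdeg n - pdeg d.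

Definition degy (p : P2) : nat := (size p).-1.
Definition degx (p : P2) : nat := \big[maxn/0%N]_(i < size p) (size p`_i).-1.

Definition dvd2 (a b : P2) : Prop := exists c : P2, b = c * a.

Definition irreducible2 (p : P2) : Prop :=
  p != 0 /\ ~~ (p \is a GRing.unit) /\
  forall a b : P2, p = a * b -> a \is a GRing.unit \/ b \is a GRing.unit.

Definition reduced2 (a b : P2) : Prop :=
  b != 0 /\ forall d : P2, dvd2 d a -> dvd2 d b -> d \is a GRing.unit.

(* K[x,y]_p : the reduced denominator of h is not divisible by p *)
Definition in_loc (p : P2) (h : F2) : Prop :=
  exists a b : P2, reduced2 a b /\ ~ dvd2 p b /\ h = a%:F / b%:F.

Definition in_ideal (p : P2) (h : F2) : Prop :=
  exists q : F2, in_loc p q /\ h = q * p%:F.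

(* bi-homogenization x0^dx y0^dy p(x1/x0, y1/y0) evaluated at (x0:x1),(y0:y1) *)
Definition bihom (p : P2) (x0 x1 y0 y1 : K) : K :=
  \sum_(i < size p) \sum_(j < (degx p).+1)
     (p`_i)`_j * (x1 ^+ j * x0 ^+ (degx p - j)) * (y1 ^+ i * y0 ^+ (degy p - i)).

(* ((x0:x1),(y0:y1)) in P^1 x P^1 lies on the curve associated with p *)
Definition on_curve (p : P2) (x0 x1 y0 y1 : K) : Prop :=
  (x0, x1) != (0, 0) /\ (y0, y1) != (0, 0) /\ bihom p x0 x1 y0 y1 = 0.

(* ---- Puiseux series in x^-1 ----
   A series is represented by its coefficient function e |-> coeff of x^e,
   e ranging over rat. *)
Definition pseries := rat -> K.

Definition is_puiseux (phi : pseries) : Prop :=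
  exists N : nat, (0 < N)%N /\ exists M : rat,
    forall e : rat, phi e != 0 -> denq (e * N%:R) = 1 /\ e <= M.

Definition ps0 : pseries := fun _ => 0.
Definition ps_add (phi psi : pseries) : pseries := fun e => phi e + psi e.
(* Cauchy product; the sum is finitely supported for Puiseux series *)
Definition ps_mul (phi psi : pseries) : pseries :=
  fun e => \big[+%R/0]_(e1 \in [set: rat]) (phi e1 * psi (e - e1)).
Definition ps_of_poly (a : {poly K}) : pseries :=
  fun e => if (denq e == 1) && (0 <= numq e) then a`_(absz (numq e)) else 0.
Definition ps1 : pseries := ps_of_poly 1.
Definition ps_pow (phi : pseries) (n : nat) : pseries := iter n (ps_mul phi) ps1.

Definition ps_eval (P : P2) (phi : pseries) : pseries :=
  \big[ps_add/ps0]_(i < size P) ps_mul (ps_of_poly P`_i) (ps_pow phi i).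

Definition ps_deg_is (phi : pseries) (d : rat) : Prop :=
  phi d != 0 /\ forall e : rat, phi e != 0 -> e <= d.

Definition frac_eval_is (h : F2) (phi s : pseries) : Prop :=
  is_puiseux s /\ exists a b : P2,
    ps_eval b phi <> ps0 /\ h = a%:F / b%:F /\ ps_mul s (ps_eval b phi) = ps_eval a phi.

End Defs.

(* Write r = a'/b' and q = a/c in lowest terms and clear denominators in
   r + q p = f - g.  Substituting the Puiseux root y = phi of p removes the
   term q p, and nothing is lost when dividing by c(x, phi): since p is
   irreducible, lies outside K[x] and does not divide c, the resultant yields
   u p + v c = d(x) <> 0, so c(x, phi) <> 0.  What is left,
     r(x, phi) f_d g_d(phi) = f_n g_d(phi) - g_n(phi) f_d,
   is an identity in the integral domain of Puiseux series, where
   deg g(phi) = deg g * deg phi.  The left-hand side dominates f_n g_d(phi)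
   exactly when deg r(x, phi) > b, and comparing degrees gives both claims. *)

From HB Require Import structures.
From mathcomp Require Import all_boot all_order all_algebra.
From mathcomp Require Import boolp classical_sets cardinality fsbigop.
From mathcomp Require Import ring lra zify.
Set Implicit Arguments.
Unset Strict Implicit.
Unset Printing Implicit Defensive.
Import Order.TTheory GRing.Theory Num.Theory.
Local Open Scope ring_scope.

Definition on_grid (N : nat) (e : rat) : bool := e * N%:R \is a Num.int.

Lemma on_gridM N k e : on_grid N e -> on_grid (N * k) e.
Proof. by rewrite /on_grid natrM mulrA => h; rewrite rpredM ?rpred_nat. Qed.

Lemma on_gridD N a b : on_grid N a -> on_grid N b -> on_grid N (a + b).
Proof. by rewrite /on_grid mulrDl; apply: rpredD. Qed.

Definition grid_window (N : nat) (lo hi : rat) : set rat :=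
  [set x | lo <= x /\ x <= hi /\ on_grid N x]%classic.

Lemma grid_window_finite N lo hi : (0 < N)%N -> finite_set (grid_window N lo hi).
Proof.
move=> N0; set l := Num.floor (lo * N%:R); set h := Num.floor (hi * N%:R).
apply: (sub_finite_set _ (finite_seq
  [seq (l + i%:Z)%:~R / N%:R : rat | i <- iota 0 (absz (h - l)).+1])).
move=> x [lox [xhi /intrP [k xk]]].
have N0' : (0 : rat) < N%:R by rewrite ltr0n.
have lk : l <= k by rewrite -(@intrKfloor rat k) -xk le_floor // ler_pM2r.
have kh : k <= h by rewrite floor_ge_int -xk ler_pM2r.
apply/mapP; exists (absz (k - l)); first by rewrite mem_iota /=; lia.
have -> : l + (absz (k - l))%:Z = k by lia.
by rewrite -xk mulfK // gt_eqF.
Qed.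

Section FiniteSums.
Context {R : nmodType} {I : choiceType}.

Lemma fsumT_restrict (W : set I) (F : I -> R) :
  (forall x, F x != 0 -> W x) -> \sum_(x \in [set: I]) F x = \sum_(x \in W) F x.
Proof.
move=> FW; rewrite (fsbig_widen W [set: I] F) // => x [_ Wx].
by apply/eqP; apply: contraT => /FW.
Qed.

Lemma fsum_neq0 (A : set I) (F : I -> R) :
  \sum_(x \in A) F x != 0 -> exists2 x, A x & F x != 0.
Proof. exact: (@fsbigN1 _ _ _ unit _ A (fun _ => F) tt). Qed.

Lemma exchange_fsumT (D : I -> I -> R) (U V : set I) :
  finite_set U -> finite_set V -> (forall a b, D a b != 0 -> U a /\ V b) ->
  \sum_(a \in [set: I]) \sum_(b \in [set: I]) D a b =
  \sum_(b \in [set: I]) \sum_(a \in [set: I]) D a b.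
Proof.
move=> fU fV DUV.
rewrite (fsumT_restrict (W := U)) => [|a /fsum_neq0 [b _ /DUV []] //].
rewrite [RHS](fsumT_restrict (W := V)) => [|b /fsum_neq0 [a _ /DUV []] //].
under eq_fsbigr => a _ do rewrite (fsumT_restrict (W := V)) => [|b /DUV []] //.
rewrite exchange_fsbig //; apply: eq_fsbigr => b _.
by apply/esym/fsumT_restrict => a /DUV [].
Qed.

End FiniteSums.

Section PuiseuxArithmetic.
Variable K : fieldType.
Local Notation ps := (pseries K).
Implicit Types phi psi chi : ps.

Definition ps_opp (phi : ps) : ps := fun e => - phi e.

Definition grid_bounded (N : nat) (M : rat) (phi : ps) :=
  (0 < N)%N /\ forall e, phi e != 0 -> on_grid N e /\ e <= M.

Lemma is_puiseuxP phi : is_puiseux phi <-> exists N M, grid_bounded N M phi.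
Proof.
split=> [[N [N0 [M H]]]|[N [M [N0 H]]]]; exists N.
  by exists M; split=> // e /H [h1 h2]; rewrite /on_grid Qint_def h1.
split=> //; exists M => e /H [h1 h2]; split=> //.
by apply/eqP; rewrite -Qint_def.
Qed.

Lemma convolution_support_finite phi psi e :
  is_puiseux phi -> is_puiseux psi ->
  finite_set [set x | phi x != 0 /\ psi (e - x) != 0]%classic.
Proof.
move=> /is_puiseuxP [N1 [M1 [N10 H1]]] /is_puiseuxP [N2 [M2 [_ H2]]].
apply: (sub_finite_set _ (grid_window_finite (e - M2) M1 N10)).
by move=> x [/H1 [o1 l1] /H2 [_ l2]]; do !split => //; lra.
Qed.

Lemma is_puiseux0 : is_puiseux (ps0 K).
Proof. by apply/is_puiseuxP; exists 1%N, 0; split=> // e; rewrite eqxx. Qed.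

Lemma is_puiseux_add phi psi :
  is_puiseux phi -> is_puiseux psi -> is_puiseux (ps_add phi psi).
Proof.
move=> /is_puiseuxP [N1 [M1 [N10 H1]]] /is_puiseuxP [N2 [M2 [N20 H2]]].
apply/is_puiseuxP; exists (N1 * N2)%N, (Num.max M1 M2).
split=> [|e]; first by rewrite muln_gt0 N10.
rewrite /ps_add; have [->|/H1 [o l] _] := eqVneq (phi e) 0.
  by rewrite add0r => /H2 [o l]; rewrite mulnC on_gridM // le_max l orbT.
by rewrite on_gridM // le_max l.
Qed.

Lemma is_puiseux_opp phi : is_puiseux phi -> is_puiseux (ps_opp phi).
Proof.
move=> /is_puiseuxP [N [M [N0 H]]]; apply/is_puiseuxP; exists N, M.
by split=> // e; rewrite /ps_opp oppr_eq0 => /H.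
Qed.

Lemma is_puiseux_mul phi psi :
  is_puiseux phi -> is_puiseux psi -> is_puiseux (ps_mul phi psi).
Proof.
move=> /is_puiseuxP [N1 [M1 [N10 H1]]] /is_puiseuxP [N2 [M2 [N20 H2]]].
apply/is_puiseuxP; exists (N1 * N2)%N, (M1 + M2).
split=> [|e /fsum_neq0 [x _]]; first by rewrite muln_gt0 N10.
rewrite mulf_eq0 negb_or => /andP [/H1 [o1 l1] /H2 [o2 l2]]; split; last lra.
rewrite -(subrK x e) on_gridD //; first by rewrite mulnC on_gridM.
exact: on_gridM.
Qed.

Lemma ps_mulC phi psi : ps_mul phi psi = ps_mul psi phi.
Proof.
apply/funext => e; rewrite /ps_mul (reindex_fsbigT (fun x => e - x)).
  by apply: eq_fsbigr => x _; rewrite subKr mulrC.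
by exists (fun x => e - x) => x; rewrite subKr.
Qed.

Lemma ps_mulDr phi psi chi : is_puiseux phi -> is_puiseux psi -> is_puiseux chi ->
  ps_mul phi (ps_add psi chi) = ps_add (ps_mul phi psi) (ps_mul phi chi).
Proof.
move=> h1 h2 h3; apply/funext => e; rewrite /ps_mul /ps_add.
set W := ([set x | phi x != 0 /\ psi (e - x) != 0] `|`
          [set x | phi x != 0 /\ chi (e - x) != 0])%classic.
have fW : finite_set W by rewrite finite_setU; split; apply: convolution_support_finite.
rewrite !(fsumT_restrict (W := W)) -?fsbig_split //.
- by apply: eq_fsbigr => x _; rewrite mulrDr.
- by move=> x; rewrite mulf_eq0 negb_or => /andP [? ?]; right.
- by move=> x; rewrite mulf_eq0 negb_or => /andP [? ?]; left.
move=> x; rewrite mulf_eq0 negb_or => /andP [? ]; have [->|] := eqVneq (psi (e - x)) 0.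
  by rewrite add0r => ?; right.
by move=> ? _; left.
Qed.

Lemma ps_mulA phi psi chi : is_puiseux phi -> is_puiseux psi -> is_puiseux chi ->
  ps_mul phi (ps_mul psi chi) = ps_mul (ps_mul phi psi) chi.
Proof.
move=> /is_puiseuxP [N1 [M1 [N10 H1]]] /is_puiseuxP [N2 [M2 [N20 H2]]].
move=> /is_puiseuxP [N3 [M3 [N30 H3]]].
apply/funext => e; rewrite /ps_mul.
pose D e2 e1 := phi e2 * psi (e1 - e2) * chi (e - e1).
transitivity (\sum_(e2 \in [set: rat]) \sum_(e1 \in [set: rat]) D e2 e1).
  apply: eq_fsbigr => e2 _; rewrite mulr_fsumr.
  rewrite (reindex_fsbigT (fun x => x - e2)); last first.
    by exists (fun x => x + e2) => x; rewrite ?subrK ?addrK.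
  by apply: eq_fsbigr => e1 _; rewrite /D mulrA; congr (_ * chi _); ring.
rewrite (exchange_fsumT (D := D) (grid_window_finite (e - M3 - M2) M1 N10)
  (grid_window_finite (N := N1 * N2) (e - M3) (M1 + M2) _)).
- by apply: eq_fsbigr => e1 _; rewrite mulr_fsuml.
- by rewrite muln_gt0 N10.
move=> e2 e1; rewrite !mulf_eq0 !negb_or.
move=> /andP [/andP [/H1 [o1 l1] /H2 [o2 l2]] /H3 [o3 l3]].
do !split => //; try lra.
rewrite -(subrK e2 e1) on_gridD //; last exact: on_gridM.
by rewrite mulnC; apply: on_gridM.
Qed.

Lemma ps_of_poly_nat (a : {poly K}) (n : nat) : ps_of_poly a n%:R = a`_n.
Proof. by rewrite /ps_of_poly pmulrn numq_int denq_int eqxx. Qed.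

Lemma ps_of_polyP (a : {poly K}) e : ps_of_poly a e != 0 ->
  exists2 n : nat, e = n%:R & a`_n != 0.
Proof.
rewrite /ps_of_poly; case: ifP => [/andP [/eqP e1 e0] an|]; last by rewrite eqxx.
exists (absz (numq e)) => //.
by rewrite pmulrn abszE ger0_norm // -[LHS]divq_num_den e1 divr1.
Qed.

Lemma is_puiseux_poly (a : {poly K}) : is_puiseux (ps_of_poly a).
Proof.
apply/is_puiseuxP; exists 1%N, (size a)%:R; split=> // e /ps_of_polyP [n -> an].
rewrite /on_grid mulr1 rpred_nat ler_nat; split=> //.
by apply: ltnW; apply: contraR an; rewrite -leqNgt => /(nth_default 0) ->.
Qed.

Lemma ps_mul1 phi : ps_mul (ps1 K) phi = phi.
Proof.
apply/funext => e; rewrite /ps_mul (fsumT_restrict (W := [set 0]%classic)).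
  by rewrite fsbig_set1 (ps_of_poly_nat 1 0 : ps1 K 0 = _) coef1 mul1r subr0.
move=> x; rewrite mulf_eq0 negb_or => /andP [/ps_of_polyP [n -> +] _].
by rewrite coef1; case: n => //= n; rewrite eqxx.
Qed.

Lemma ps_of_polyD (a b : {poly K}) :
  ps_of_poly (a + b) = ps_add (ps_of_poly a) (ps_of_poly b).
Proof.
by apply/funext => e; rewrite /ps_add /ps_of_poly; case: ifP; rewrite ?coefD ?addr0.
Qed.

Lemma ps_of_polyN (a : {poly K}) : ps_of_poly (- a) = ps_opp (ps_of_poly a).
Proof.
by apply/funext => e; rewrite /ps_opp /ps_of_poly; case: ifP; rewrite ?coefN ?oppr0.
Qed.

Lemma ps_of_polyM (a b : {poly K}) :
  ps_of_poly (a * b) = ps_mul (ps_of_poly a) (ps_of_poly b).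
Proof.
apply/funext => e; rewrite /ps_mul.
have [[n ->]|Nn] := pselect (exists n : nat, e = n%:R); last first.
  have [/ps_of_polyP [n en _]|/negPn/eqP ->] := boolP (ps_of_poly (a * b) e != 0).
    by case: Nn; exists n.
  apply/esym/fsbig1 => x _; apply/eqP; apply: contraT.
  rewrite mulf_eq0 negb_or => /andP [/ps_of_polyP [i xi _] /ps_of_polyP [j xj _]].
  by case: Nn; exists (i + j)%N; rewrite natrD -xi -xj addrC subrK.
rewrite ps_of_poly_nat coefM.
rewrite (fsumT_restrict (W := [set` [seq (i%:R : rat) | i <- iota 0 n.+1]]%classic)).
  rewrite -fsbig_seq; last first.
    by rewrite map_inj_uniq ?iota_uniq // => i j /eqP; rewrite eqr_nat => /eqP.
  rewrite big_map -val_enum_ord big_map big_enum /=; apply: eq_bigr => j _.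
  by rewrite !ps_of_poly_nat -natrB ?ps_of_poly_nat // -ltnS.
move=> x; rewrite mulf_eq0 negb_or => /andP [/ps_of_polyP [i xi _] /ps_of_polyP [j xj _]].
have nij : n = (i + j)%N by apply/eqP; rewrite -(eqr_nat rat) natrD -xi -xj addrC subrK.
by apply/mapP; exists i; rewrite // mem_iota /= add0n ltnS nij leq_addr.
Qed.

End PuiseuxArithmetic.

Section PuiseuxRing.
Variable K : fieldType.
Local Notation ps := (pseries K).

Definition puiseux := {phi : ps | `[< is_puiseux phi >]}.
HB.instance Definition _ := [isSub for (@sval ps (fun phi => `[< is_puiseux phi >]))].
HB.instance Definition _ := [Choice of puiseux by <:].

Lemma puiseuxP (x : puiseux) : is_puiseux (val x). Proof. exact: asboolW (valP x). Qed.
Definition to_puiseux {phi : ps} (h : is_puiseux phi) : puiseux := exist _ phi (asboolT h).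

Definition puiseux_zero := to_puiseux (is_puiseux0 K).
Definition puiseux_opp x := to_puiseux (is_puiseux_opp (puiseuxP x)).
Definition puiseux_add x y := to_puiseux (is_puiseux_add (puiseuxP x) (puiseuxP y)).
Definition puiseux_one := to_puiseux (is_puiseux_poly (1 : {poly K})).
Definition puiseux_mul x y := to_puiseux (is_puiseux_mul (puiseuxP x) (puiseuxP y)).

Lemma puiseux_addA : associative puiseux_add.
Proof. by move=> x y z; apply/val_inj/funext => e; apply: addrA. Qed.
Lemma puiseux_addC : commutative puiseux_add.
Proof. by move=> x y; apply/val_inj/funext => e; apply: addrC. Qed.
Lemma puiseux_add0 : left_id puiseux_zero puiseux_add.
Proof. by move=> x; apply/val_inj/funext => e; apply: add0r. Qed.
Lemma puiseux_addN : left_inverse puiseux_zero puiseux_opp puiseux_add.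
Proof. by move=> x; apply/val_inj/funext => e; apply: addNr. Qed.

HB.instance Definition _ := GRing.isZmodule.Build puiseux
  puiseux_addA puiseux_addC puiseux_add0 puiseux_addN.

Lemma puiseux_mulA : associative puiseux_mul.
Proof. by move=> x y z; apply/val_inj/ps_mulA; apply: puiseuxP. Qed.
Lemma puiseux_mulC : commutative puiseux_mul.
Proof. by move=> x y; apply/val_inj/ps_mulC. Qed.
Lemma puiseux_mul1 : left_id puiseux_one puiseux_mul.
Proof. by move=> x; apply/val_inj/ps_mul1. Qed.
Lemma puiseux_mulDl : left_distributive puiseux_mul puiseux_add.
Proof.
move=> x y z; apply: val_inj => /=.
rewrite ps_mulC ps_mulDr; try exact: puiseuxP.
by congr ps_add; apply: ps_mulC.
Qed.
Lemma puiseux_one_neq0 : puiseux_one != puiseux_zero.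
Proof.
apply/eqP => /(congr1 (fun x : puiseux => val x 0%:R)) /=.
by rewrite ps_of_poly_nat coef1 => /eqP; rewrite oner_eq0.
Qed.

HB.instance Definition _ := GRing.Zmodule_isComNzRing.Build puiseux
  puiseux_mulA puiseux_mulC puiseux_mul1 puiseux_mulDl puiseux_one_neq0.

Definition ps_poly (a : {poly K}) : puiseux := to_puiseux (is_puiseux_poly a).

Lemma ps_poly_is_zmod_morphism : zmod_morphism ps_poly.
Proof. by move=> a b; apply: val_inj; rewrite /= ps_of_polyD ps_of_polyN. Qed.

Lemma ps_poly_is_monoid_morphism : monoid_morphism ps_poly.
Proof. by split=> [|a b]; apply: val_inj; rewrite //= ps_of_polyM. Qed.

HB.instance Definition _ := GRing.isZmodMorphism.Build {poly K} puiseux ps_poly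
  ps_poly_is_zmod_morphism.
HB.instance Definition _ := GRing.isMonoidMorphism.Build {poly K} puiseux ps_poly
  ps_poly_is_monoid_morphism.

Lemma ps_poly_inj : injective ps_poly.
Proof.
move=> a b /(congr1 val) hab; apply/polyP => n.
by rewrite -!ps_of_poly_nat; apply: (congr1 (fun f : ps => f n%:R) hab).
Qed.

End PuiseuxRing.

Lemma seq_max_exists d (T : orderType d) (s : seq T) x0 :
  x0 \in s -> exists2 m, m \in s & forall x, x \in s -> (x <= m)%O.
Proof.
elim: s x0 => // a s IH x0 _; case: s IH => [|b s] IH.
  by exists a => [|x]; rewrite ?mem_seq1 // => /eqP ->.
have [m ms Hm] := IH b (mem_head _ _).
exists (Order.max a m); first by case: leP; rewrite ?mem_head // inE ms orbT.
by move=> x; rewrite inE le_max => /predU1P [->|/Hm ->]; rewrite ?lexx ?orbT.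
Qed.

Section PuiseuxDegree.
Variable K : fieldType.
Local Notation ps := (pseries K).
Implicit Types (phi psi : ps) (d m : rat).

Definition ps_deg_le phi m := forall e, phi e != 0 -> e <= m.

Lemma ps_deg_is_le phi d m : ps_deg_is phi d -> ps_deg_le phi m -> d <= m.
Proof. by move=> [phid0 _]; apply. Qed.

Lemma ps_deg_is_uniq phi d1 d2 : ps_deg_is phi d1 -> ps_deg_is phi d2 -> d1 = d2.
Proof. by move=> [h1 H1] [h2 H2]; apply/le_anti; rewrite H1 ?H2. Qed.

Lemma ps_deg_le_add phi psi m :
  ps_deg_le phi m -> ps_deg_le psi m -> ps_deg_le (ps_add phi psi) m.
Proof.
move=> hphi hpsi e; rewrite /ps_add; have [->|/hphi //] := eqVneq (phi e) 0.
by rewrite add0r => /hpsi.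
Qed.

Lemma ps_deg_le_opp phi m : ps_deg_le phi m -> ps_deg_le (ps_opp phi) m.
Proof. by move=> hphi e; rewrite /ps_opp oppr_eq0 => /hphi. Qed.

Lemma ps_deg_is_opp phi d : ps_deg_is phi d -> ps_deg_is (ps_opp phi) d.
Proof. by move=> [phid0 H]; split; [rewrite /ps_opp oppr_eq0 | apply: ps_deg_le_opp]. Qed.

Lemma ps_deg_is_add_lt phi psi d :
  ps_deg_is phi d -> (forall e, psi e != 0 -> e < d) -> ps_deg_is (ps_add phi psi) d.
Proof.
move=> [phid0 H] Hpsi; split.
  by rewrite /ps_add; have [->|/Hpsi] := eqVneq (psi d) 0; rewrite ?addr0 ?ltxx.
by apply: ps_deg_le_add => // e /Hpsi /ltW.
Qed.

Lemma ps_deg_is_mul phi psi d1 d2 : ps_deg_is phi d1 -> ps_deg_is psi d2 ->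
  ps_deg_is (ps_mul phi psi) (d1 + d2).
Proof.
move=> [phi0 Hphi] [psi0 Hpsi]; split; last first.
  move=> e /fsum_neq0 [x _]; rewrite mulf_eq0 negb_or => /andP [/Hphi ? /Hpsi ?].
  lra.
rewrite /ps_mul (fsumT_restrict (W := [set d1]%classic)).
  by rewrite fsbig_set1 addrC addKr mulf_neq0.
move=> x; rewrite mulf_eq0 negb_or => /andP [/Hphi l1 /Hpsi l2] /=.
by apply/eqP; rewrite eq_le l1 /=; lra.
Qed.

Lemma ps_deg_is_poly (a : {poly K}) : a != 0 -> ps_deg_is (ps_of_poly a) (pdeg a)%:~R.
Proof.
move=> a0; rewrite /pdeg -pmulrn; split.
  by rewrite ps_of_poly_nat -lead_coefE lead_coef_eq0.
move=> e /ps_of_polyP [n -> an]; rewrite ler_nat -ltnS prednK ?size_poly_gt0 //.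
by apply: contraR an; rewrite -leqNgt => /(nth_default 0) ->.
Qed.

Lemma ps_deg_exists phi : is_puiseux phi -> phi <> ps0 K -> exists d, ps_deg_is phi d.
Proof.
move=> /is_puiseuxP [N [M [N0 H]]] phi0.
have [[e0 phie0]|phi_eq0] := pselect (exists e0, phi e0 != 0); last first.
  by case: phi0; apply/funext => e; apply/eqP/contraT => phie; case: phi_eq0; exists e.
set S := (grid_window N e0 M `&` [set e | phi e != 0])%classic.
have [s Ss] := (finite_seqP S).1
  (sub_finite_set (@subIsetl _ _ _) (grid_window_finite e0 M N0)).
have inS e : phi e != 0 -> e0 <= e -> e \in s.
  by move=> phie e0e; have [? ?] := H _ phie; have : S e by []; rewrite Ss.
have [m ms Hm] := seq_max_exists (inS _ phie0 (lexx e0)).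
have [_ phim] : S m by rewrite Ss.
exists m; split=> // e phie.
have [/(inS _ phie)/Hm //|lt] := lerP e0 e.
exact: le_trans (ltW lt) (Hm _ (inS _ phie0 (lexx e0))).
Qed.

Lemma puiseux_deg_exists (x : puiseux K) : x != 0 -> exists d, ps_deg_is (val x) d.
Proof.
move=> x0; apply: ps_deg_exists (puiseuxP x) _ => x_eq0.
by move: x0; rewrite -(inj_eq val_inj) x_eq0 eqxx.
Qed.

Lemma puiseux_mulf_neq0 (x y : puiseux K) : x != 0 -> y != 0 -> x * y != 0.
Proof.
move=> /puiseux_deg_exists [dx hx] /puiseux_deg_exists [dy hy].
have [xy0 _] := ps_deg_is_mul hx hy.
by apply: contraNneq xy0 => xy_eq0; rewrite -[ps_mul _ _]/(val (x * y)) xy_eq0.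
Qed.

Lemma puiseux_mulIf (x y z : puiseux K) : z != 0 -> x * z = y * z -> x = y.
Proof.
move=> z0 /eqP; rewrite -subr_eq0 -mulrBl => /eqP xyz0.
apply/subr0_eq/eqP/negP => /negP xy0.
by move: (puiseux_mulf_neq0 xy0 z0); rewrite xyz0 eqxx.
Qed.

End PuiseuxDegree.

Section PuiseuxHorner.
Variable K : fieldType.
Implicit Types (Phi : puiseux K) (P : {poly {poly K}}).

Definition ps_horner Phi P := (map_poly (@ps_poly K) P).[Phi].

Lemma ps_horner0 Phi : ps_horner Phi 0 = 0.
Proof. by rewrite /ps_horner rmorph0 horner0. Qed.

Lemma ps_hornerD Phi P Q : ps_horner Phi (P + Q) = ps_horner Phi P + ps_horner Phi Q.
Proof. by rewrite /ps_horner rmorphD hornerD. Qed.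

Lemma ps_hornerB Phi P Q : ps_horner Phi (P - Q) = ps_horner Phi P - ps_horner Phi Q.
Proof. by rewrite /ps_horner rmorphB hornerD hornerN. Qed.

Lemma ps_hornerM Phi P Q : ps_horner Phi (P * Q) = ps_horner Phi P * ps_horner Phi Q.
Proof. by rewrite /ps_horner rmorphM hornerM. Qed.

Lemma ps_hornerC Phi c : ps_horner Phi c%:P = ps_poly c.
Proof. by rewrite /ps_horner map_polyC hornerC. Qed.

Lemma ps_hornerX Phi : ps_horner Phi 'X = Phi.
Proof. by rewrite /ps_horner map_polyX hornerX. Qed.

Lemma val_ps_horner phi (h : is_puiseux phi) P :
  val (ps_horner (to_puiseux h) P) = ps_eval P phi.
Proof.
rewrite /ps_horner horner_coef size_map_inj_poly ?rmorph0 //; last exact: ps_poly_inj.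
rewrite (big_morph val (fun _ _ => erefl) (erefl (val (0 : puiseux K)))).
apply: eq_bigr => i _; rewrite coef_map; congr ps_mul.
by elim: (i : nat) => // n IH; rewrite exprS /= IH.
Qed.

Lemma ps_deg_is_horner_map_polyC Phi d (g : {poly K}) :
  ps_deg_is (val Phi) d -> 0 < d -> g != 0 ->
  ps_deg_is (val (ps_horner Phi g^:P)) ((pdeg g)%:~R * d).
Proof.
move=> hd d0; elim/poly_ind: g => [|g c IH]; first by rewrite eqxx.
have [-> |g0 _] := eqVneq g 0.
  rewrite mul0r add0r => c0; have := ps_deg_is_poly c0.
  by rewrite map_polyC ps_hornerC /pdeg size_polyC -polyC_eq0 c0 mul0r.
rewrite /pdeg size_MXaddC (negbTE g0) /= -(prednK (n := size g)) ?size_poly_gt0 //.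
rewrite -pmulrn mulrS -/(pdeg g) mulrDl mul1r.
rewrite rmorphD rmorphM /= map_polyX map_polyC ps_hornerD ps_hornerM ps_hornerX ps_hornerC.
apply: ps_deg_is_add_lt; first by rewrite addrC; exact: (ps_deg_is_mul (IH g0) hd).
move=> e /ps_of_polyP [[|n] ->]; rewrite coefC ?eqxx //= => _.
by rewrite ltr_pwDl ?mulr_ge0 ?ler0n ?ltW.
Qed.

End PuiseuxHorner.

Section Gauss.
Variable K : closedFieldType.
Local Notation P2 := {poly {poly K}}.
Implicit Types (p c G H P : P2) (d : {poly K}).

Lemma XsubC_coef_factor G a : map_poly (horner_eval a) G = 0 ->
  exists G', G = ('X - a%:P)%:P * G'.
Proof.
move=> Ga0; exists (map_poly (fun q => q %/ ('X - a%:P)) G).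
apply/polyP => i; rewrite coefCM coef_map_id0 ?div0p //.
have : (map_poly (horner_eval a) G)`_i = 0 by rewrite Ga0 coef0.
rewrite coef_map /= horner_evalE => /eqP /factor_theorem [q ->].
by rewrite mulpK ?polyXsubC_eq0 // mulrC.
Qed.

(* Gauss's lemma over K[x]: each linear factor x - a of d divides G or H,
   because evaluating at x = a lands in the domain K[y]. *)
Lemma polyC_mul_eq_split d G H P : d != 0 -> d%:P * P = G * H ->
  exists e1 e2 G1 H1, [/\ G = e1%:P * G1, H = e2%:P * H1 & P = G1 * H1].
Proof.
have [n] := ubnP (size d); elim: n => // n IH in d G H P *; rewrite ltnS => szd d0 E.
have [d_const|d_nconst] := leqP (size d) 1.
  have dE := size1_polyC d_const; have k0 : d`_0 != 0 by rewrite -polyC_eq0 -dE.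
  exists d, 1, ((d`_0)^-1%:P%:P * G), H; split; rewrite ?polyC1 ?mul1r //.
    by rewrite mulrA -!polyCM {1}dE -polyCM mulfV // !polyC1 mul1r.
  apply: (mulfI (_ : d%:P != 0)); first by rewrite polyC_eq0.
  by rewrite E !mulrA -polyCM {1}dE -!polyCM mulfV // !polyC1 mul1r.
have [a /factor_theorem [d' dE]] := closed_rootP d (negbT (gtn_eqF d_nconst)).
have d'0 : d' != 0 by apply: contraNneq d0 => d'0; rewrite dE d'0 mul0r.
have szd' : (size d' < n)%N.
  by move: szd; rewrite dE size_Mmonic ?monicXsubC // size_XsubC addn2.
have Xa0 : ('X - a%:P)%:P != 0 :> P2 by rewrite polyC_eq0 polyXsubC_eq0.
have da0 : horner_eval a d = 0 by rewrite horner_evalE dE hornerM hornerXsubC subrr mulr0.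
have : map_poly (horner_eval a) G * map_poly (horner_eval a) H == 0.
  by apply/eqP; rewrite -rmorphM -E rmorphM /= map_polyC /= da0 mul0r.
rewrite mulf_eq0 => /orP [/eqP/XsubC_coef_factor [G' GE]|/eqP/XsubC_coef_factor [H' HE]].
  have E' : d'%:P * P = G' * H.
    by apply: (mulfI Xa0); rewrite mulrA -polyCM (mulrC _ d') -dE E GE mulrA.
  have [e1 [e2 [G1 [H1 [G'E HE' PE]]]]] := IH d' G' H P szd' d'0 E'.
  by exists (('X - a%:P) * e1), e2, G1, H1; rewrite GE G'E mulrA -polyCM.
have E' : d'%:P * P = G * H'.
  by apply: (mulfI Xa0); rewrite mulrA -polyCM (mulrC _ d') -dE E HE mulrCA.
have [e1 [e2 [G1 [H1 [GE H'E PE]]]]] := IH d' G H' P szd' d'0 E'.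
by exists e1, (('X - a%:P) * e2), G1, H1; rewrite HE H'E mulrA -polyCM.
Qed.

Lemma unit_poly2P (u : P2) : u \is a GRing.unit -> exists2 k : K, k != 0 & u = k%:P%:P.
Proof.
rewrite poly_unitE => /andP [/eqP u1]; rewrite poly_unitE => /andP [/eqP u01].
rewrite unitfE => u000; exists (u`_0)`_0 => //.
by rewrite {1}(size1_polyC (eq_leq u1)) {1}(size1_polyC (eq_leq u01)).
Qed.

Lemma irreducible2_dvd_polyC_mul p c G d :
  irreducible2 p -> ~ (exists a, p = a%:P) -> d != 0 -> d%:P * c = G * p -> dvd2 p c.
Proof.
move=> [_ [_ p_irr]] p_nconst d0 E.
have [e1 [e2 [G1 [p1 [_ pE cE]]]]] := polyC_mul_eq_split d0 E.
have [/unit_poly2P [k k0 e2E]|/unit_poly2P [k k0 p1E]] := p_irr _ _ pE.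
  exists (G1 * k^-1%:P%:P); rewrite cE pE e2E -mulrA; congr (G1 * _).
  by rewrite mulrA -!polyCM mulVf // !polyC1 mul1r.
by case: p_nconst; exists (e2 * k%:P); rewrite pE p1E -polyCM.
Qed.

Lemma irreducible2_bezout p c :
  irreducible2 p -> ~ (exists a, p = a%:P) -> ~ dvd2 p c -> c != 0 ->
  exists u v (d : {poly K}), d != 0 /\ u * p + v * c = d%:P.
Proof.
move=> p_irr p_nconst p_ndvd c0.
have [c_const|c_nconst] := leqP (size c) 1.
  exists 0, 1, c`_0; rewrite mul0r add0r mul1r -(size1_polyC c_const).
  by split; rewrite // -polyC_eq0 -(size1_polyC c_const).
have p_size : (1 < size p)%N.
  by rewrite ltnNge; apply/negP => /size1_polyC pE; apply: p_nconst; exists p`_0.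
have [[u v] /= [_ _] E] := resultant_in_ideal p_size c_nconst.
exists u, v, (resultant p c); split=> //; apply/negP => /eqP res0.
have := resultant_eq0 p c; rewrite res0 eqxx => /esym gcd_nconst.
have /Pdiv.Idomain.dvdpP [[k1 h1] /= k10 E1] := Pdiv.Idomain.dvdp_gcdl p c.
have /Pdiv.Idomain.dvdpP [[k2 h2] /= k20 E2] := Pdiv.Idomain.dvdp_gcdr p c.
rewrite -mul_polyC in E1; rewrite -mul_polyC in E2.
have [e1 [e2 [H1 [G1 [_ gE pE]]]]] := polyC_mul_eq_split k10 E1.
have [/unit_poly2P [k k0 HE]|/unit_poly2P [k k0 GE]] := p_irr.2.2 _ _ pE; last first.
  by move: gcd_nconst; rewrite gE GE -polyCM size_polyC; case: (_ != 0).
have cE : k2%:P * c = h2 * e2%:P * k^-1%:P%:P * p.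
  rewrite E2 gE pE HE -!mulrA; do 2!congr (_ * _).
  by rewrite !mulrA -!polyCM mulVf ?polyC1 ?mul1r.
exact/p_ndvd/(irreducible2_dvd_polyC_mul p_irr p_nconst k20 cE).
Qed.

End Gauss.

Lemma clear_denominators (F : fieldType) (a' b' a c p fn fd gn gd : F) :
  b' != 0 -> c != 0 -> fd != 0 -> gd != 0 ->
  a' / b' + a / c * p = fn / fd - gn / gd ->
  a' * c * fd * gd + a * p * b' * fd * gd = (fn * gd - gn * fd) * b' * c.
Proof.
move=> b'0 c0 fd0 gd0 E.
transitivity (b' * c * fd * gd * (a' / b' + a / c * p)).
  by field; rewrite c0 b'0.
by rewrite E; field; rewrite fd0 gd0.
Qed.

Lemma tofrac_clear_denominators (R : idomainType) (a' b' a c p fn fd gn gd : R) :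
  b' != 0 -> c != 0 -> fd != 0 -> gd != 0 ->
  a'%:F / b'%:F + a%:F / c%:F * p%:F = fn%:F / fd%:F - gn%:F / gd%:F ->
  a' * c * fd * gd + a * p * b' * fd * gd = (fn * gd - gn * fd) * b' * c.
Proof.
rewrite -!(tofrac_eq0 (R := R)) => b'0 c0 fd0 gd0.
move=> /(clear_denominators b'0 c0 fd0 gd0) E.
by apply/eqP; rewrite -tofrac_eq !(tofracB, tofracD, tofracM) E.
Qed.

Lemma ps_horner_neq0 (K : closedFieldType) (Phi : puiseux K) (p c : {poly {poly K}}) :
  irreducible2 p -> ~ (exists a, p = a%:P) -> ~ dvd2 p c -> c != 0 ->
  ps_horner Phi p = 0 -> ps_horner Phi c != 0.
Proof.
move=> p_irr p_nconst p_ndvd c0 p_root.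
have [u [v [d [d0 E]]]] := irreducible2_bezout p_irr p_nconst p_ndvd c0.
apply: contra_neq d0 => c_root; apply: ps_poly_inj.
by rewrite -(ps_hornerC Phi) -E ps_hornerD !ps_hornerM p_root c_root !mulr0 addr0 rmorph0.
Qed.

Section DegreeComparison.
Variable K : fieldType.
Implicit Types (Phi S x y : puiseux K).

Lemma ps_horner_cleared Phi S a' b' a c p F G H :
  ps_horner Phi p = 0 -> S * ps_horner Phi b' = ps_horner Phi a' ->
  ps_horner Phi b' != 0 -> ps_horner Phi c != 0 ->
  a' * c * F * G + a * p * b' * F * G = H * b' * c ->
  S * ps_horner Phi F * ps_horner Phi G = ps_horner Phi H.
Proof.
move=> p_root a'E b'0 c0 /(congr1 (ps_horner Phi)).
rewrite !(ps_hornerD, ps_hornerM) p_root -a'E mulr0 !mul0r addr0 => E.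
apply: (puiseux_mulIf (puiseux_mulf_neq0 b'0 c0)).
by rewrite [RHS]mulrA -E; ring.
Qed.

Lemma puiseux_deg_sub x y dx m :
  ps_deg_is (val x) dx -> ps_deg_le (val y) m ->
  (m < dx -> ps_deg_is (val (y - x)) dx) /\ (dx <= m -> ps_deg_le (val (y - x)) m).
Proof.
move=> degx ley; rewrite addrC; split=> [m_lt|dx_le].
  by apply: ps_deg_is_add_lt (ps_deg_is_opp degx) _ => e /ley /le_lt_trans; apply.
by apply: ps_deg_le_add => // e /(ps_deg_is_opp degx).2 /le_trans; apply.
Qed.

Lemma m_inf_deg_comparison Phi S dphi dr b (fn fd gn gd : {poly K}) :
  ps_deg_is (val Phi) dphi -> 0 < dphi -> ps_deg_is (val S) dr -> fd != 0 -> gd != 0 ->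
  (fn != 0 -> (m_inf fn fd)%:~R <= b) ->
  S * ps_horner Phi fd%:P * ps_horner Phi gd^:P =
    ps_horner Phi (fn%:P * gd^:P - gn^:P * fd%:P) ->
  (b < dr -> gn != 0 /\ (m_inf gn gd)%:~R = dr / dphi) /\
  (dr <= b -> gn != 0 -> (m_inf gn gd)%:~R <= b / dphi).
Proof.
move=> degPhi dphi0 degS fd0 gd0 hb.
rewrite ps_hornerB !ps_hornerM !ps_hornerC => E.
have deg_y := ps_deg_is_horner_map_polyC degPhi dphi0.
have mE n d : (m_inf n d)%:~R = (pdeg n)%:~R - (pdeg d)%:~R :> rat by rewrite /m_inf intrB.
set D := (pdeg fd)%:~R + (pdeg gd)%:~R * dphi.
have degA : ps_deg_is (val (S * ps_poly fd * ps_horner Phi gd^:P)) (dr + D).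
  rewrite addrA; apply: ps_deg_is_mul (deg_y _ gd0).
  exact: ps_deg_is_mul degS (ps_deg_is_poly fd0).
have leB : ps_deg_le (val (ps_poly fn * ps_horner Phi gd^:P)) (b + D).
  have [->|fn0] := eqVneq fn 0; first by rewrite rmorph0 mul0r => e; rewrite eqxx.
  move=> e /(ps_deg_is_mul (ps_deg_is_poly fn0) (deg_y _ gd0)).2.
  by have := hb fn0; rewrite mE /D; lra.
have degX g : g != 0 -> ps_deg_is (val (ps_horner Phi g^:P * ps_poly fd))
    ((pdeg g)%:~R * dphi + (pdeg fd)%:~R).
  by move=> g0; apply: ps_deg_is_mul (deg_y _ g0) (ps_deg_is_poly fd0).
have [dom sub] := puiseux_deg_sub degA leB.
have XE : ps_poly fn * ps_horner Phi gd^:P - S * ps_poly fd * ps_horner Phi gd^:P =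
  ps_horner Phi gn^:P * ps_poly fd by rewrite E; ring.
rewrite XE ltrD2r lerD2r in dom sub.
split=> [b_lt|dr_le gn0].
  have gn0 : gn != 0.
    have [X0 _] := dom b_lt; apply: contraNneq X0 => ->.
    by rewrite rmorph0 ps_horner0 mul0r.
  split=> //; have := ps_deg_is_uniq (degX _ gn0) (dom b_lt).
  rewrite mE /D => degE; rewrite -[LHS](mulfK (lt0r_neq0 dphi0)) mulrBl.
  by congr (_ / _); lra.
have := ps_deg_is_le (degX _ gn0) (sub dr_le).
by rewrite mE ler_pdivlMr // mulrBl /D; lra.
Qed.

End DegreeComparison.

Theorem lemma1 (K : closedFieldType) (hchar : [pchar K] =i pred0)
  (p : {poly {poly K}}) (hirr : irreducible2 p)
  (hnx : ~ (exists a : {poly K}, p = a%:P))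
  (hny : ~ (exists b : {poly K}, p = b^:P))
  (r q : {fraction {poly {poly K}}})
  (hr : in_loc p r) (hrp : ~ in_ideal p r) (hq : in_loc p q)
  (fn fd gn gd : {poly K}) (hfd : fd != 0) (hgd : gd != 0)
  (heq : r + q * p%:F =
         (fn%:P)%:F / (fd%:P)%:F - (gn^:P)%:F / (gd^:P)%:F)
  (hinf : on_curve p 0 1 0 1)
  (phi : pseries K) (hphi : is_puiseux phi) (hroot : ps_eval p phi = ps0 K)
  (dphi : rat) (hdphi : ps_deg_is phi dphi) (hdpos : 0 < dphi)
  (b : rat) (hb : fn != 0 -> (m_inf fn fd)%:~R <= b)
  (s : pseries K) (hs : frac_eval_is r phi s) (dr : rat) (hdr : ps_deg_is s dr) :
  (b < dr -> gn != 0 /\ (m_inf gn gd)%:~R = dr / dphi) /\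
  (dr <= b -> gn != 0 -> (m_inf gn gd)%:~R <= b / dphi).
Proof.
have [s_puiseux [a' [b' [b'_phi0 [rE s_eq]]]]] := hs.
have [a [c [[c0 _] [p_ndvd_c qE]]]] := hq.
pose Phi := to_puiseux hphi; pose S := to_puiseux s_puiseux.
have p_root : ps_horner Phi p = 0 by apply: val_inj; rewrite val_ps_horner hroot.
have b'_root0 : ps_horner Phi b' != 0.
  by apply/eqP => /(congr1 val); rewrite val_ps_horner; apply: b'_phi0.
have b'0 : b' != 0 by apply: contraNneq b'_root0 => ->; rewrite ps_horner0.
have S_eq : S * ps_horner Phi b' = ps_horner Phi a'.
  by apply: val_inj; rewrite /= !val_ps_horner; apply: s_eq.
have c_root0 := ps_horner_neq0 hirr hnx p_ndvd_c c0 p_root.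
have fd0 : fd%:P != 0 :> {poly {poly K}} by rewrite polyC_eq0.
have gd0 : gd^:P != 0 :> {poly {poly K}} by rewrite map_poly_eq0 ?rmorph_inj.
rewrite rE qE in heq.
have := ps_horner_cleared p_root S_eq b'_root0 c_root0
  (tofrac_clear_denominators b'0 c0 fd0 gd0 heq).
exact: (m_inf_deg_comparison (Phi := Phi) (S := S) hdphi hdpos hdr hfd hgd hb).
Qed.
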